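(* Let $A$ be any set and $C\subseteq A\times A$ (equivalently a map $C:A\times A\to\{0,1\}$). Then the diagonal set $z=\{b\in A\mid (b,b)\in C\}$ can be written as a (possibly infinite) union of (possibly infinite) intersections of subsets of $A$ that are rows $\{b\mid (a,b)\in C\}$ or columns $\{b\mid (b,a)\in C\}$ $(a\in A)$ of $C$. *)

Definition row {A : Type} (C : A -> A -> Prop) (a : A) : A -> Prop :=
  fun b => C a b.

Definition col {A : Type} (C : A -> A -> Prop) (a : A) : A -> Prop :=
  fun b => C b a.

Definition diag {A : Type} (C : A -> A -> Prop) : A -> Prop :=
  fun b => C b b.

Definition rowcol {A : Type} (C : A -> A -> Prop) (a : A) (s : bool) : A -> Prop :=
  if s then row C a else col C a.


(* For a diagonal point c, intersect the rows of all a with (a,c) ∈ C and the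
   columns of all a with (c,a) ∈ C.  This set contains c, and any b in it is
   diagonal: (c,c) ∈ C puts b in the row of c, so (c,b) ∈ C, which in turn
   puts b in its own column. *)

Section Links.

Variables (A : Type) (C : A -> A -> Prop).

Definition link_index (c : A) : Type := ({a : A | C a c} + {a : A | C c a})%type.

Definition link_point {c : A} (j : link_index c) : A :=
  match j with inl x => proj1_sig x | inr x => proj1_sig x end.

Definition link_is_row {c : A} (j : link_index c) : bool :=
  match j with inl _ => true | inr _ => false end.

Definition link_set (c b : A) : Prop :=
  forall j : link_index c, rowcol C (link_point j) (link_is_row j) b.

Lemma link_set_refl (c : A) : link_set c c.
Proof. intros [[a Hac] | [a Hca]]; assumption. Qed.

Lemma link_set_diag (c b : A) : diag C c -> link_set c b -> diag C b.
Proof.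
  intros Hcc Hcb.
  assert (Hrow : C c b) by exact (Hcb (inl (exist (fun a => C a c) c Hcc))).
  exact (Hcb (inr (exist (fun a => C c a) b Hrow))).
Qed.

End Links.

Theorem lemma2p4 (A : Type) (C : A -> A -> Prop) :
  exists (I : Type) (J : I -> Type) (a : forall i : I, J i -> A)
         (r : forall i : I, J i -> bool),
    forall b : A, diag C b <-> (exists i : I, forall j : J i, rowcol C (a i j) (r i j) b).
Proof.
  exists {c : A | diag C c}, (fun i => link_index A C (proj1_sig i)).
  exists (fun i j => link_point A C j), (fun i j => link_is_row A C j).
  intros b; split.
  - intros Hbb. exists (exist _ b Hbb). exact (link_set_refl A C b).
  - intros [[c Hcc] Hcb]. exact (link_set_diag A C c b Hcc Hcb).
Qed.
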